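(* Let $\Gamma$ be a weighted digraph with vertex set $V$ and normalized matrix of maximum out-forests $\bar J$; let $\widetilde K$ be the union of the vertex sets of all basis bicomponents of $\Gamma$; for $k\in\widetilde K$ let $K(k)$ be the basis bicomponent containing $k$ and $K^+(k)$ the set of vertices reachable by directed paths from $K(k)$ and unreachable from all other basis bicomponents. Then for all $i,j\in V$: (1) $\bar J_{ii}\ge\bar J_{ji}$; (2) if $\bar J_{ii}>\bar J_{ji}$, then $i\in\widetilde K$ and $j\notin K^+(i)$, and $\Gamma$ contains no directed path from $j$ to $i$; (3) if $\bar J_{ii}>\bar J_{ji}>0$, then $j\notin\widetilde K$, and consequently $j$ is not a root in any maximum out-forest of $\Gamma$; (4) if $\bar J_{ij}>0$, then $\bar J_{ii}=\bar J_{ji}$.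
   Context: A weighted digraph $\Gamma$ has no loops and each arc has a positive weight. A diverging tree is a rooted directed tree with directed paths from its root to all its other vertices; an out-forest is a spanning subgraph whose weak components are diverging trees; a maximum out-forest is one with the maximum number of arcs. The weight of a subgraph is the product of its arc weights. $\bar J_{ij}$ is the total weight of the maximum out-forests of $\Gamma$ in which $i$ belongs to the tree rooted at $j$, divided by the total weight of all maximum out-forests. A basis bicomponent is a strong component into which no arc enters from outside it. *)

From HB Require Import structures.
From mathcomp Require Import all_boot all_order all_algebra.
Set Implicit Arguments. Unset Strict Implicit. Unset Printing Implicit Defensive.
Import Order.TTheory GRing.Theory Num.Theory.

(* A weighted digraph on a finite vertex type V is given by
   an arc relation E : rel V (no loops) and a weight function w : V -> V -> R
   which is positive on arcs.  Subgraphs are sets of arcs. *)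

Section Forests.
Variables (V : finType).

Definition srel (F : {set V * V}) : rel V := fun u v => (u, v) \in F.

Definition is_root (F : {set V * V}) (v : V) : bool :=
  [forall u, (u, v) \notin F].

(* Out-forest of the digraph E: a spanning subgraph (arcs of E) whose weak
   components are diverging trees, i.e. every vertex has in-degree at most 1
   and every vertex is reachable by a directed path (in F) from a root. *)
Definition out_forest (E : rel V) (F : {set V * V}) : bool :=
  [&& [forall a in F, E a.1 a.2],
      [forall v, #|[set u | (u, v) \in F]| <= 1] &
      [forall v, exists r, is_root F r && connect (srel F) r v]].

Definition max_forest_size (E : rel V) : nat :=
  \max_(F : {set V * V} | out_forest E F) #|F|.

Definition max_out_forest (E : rel V) (F : {set V * V}) : bool :=
  out_forest E F && (#|F| == max_forest_size E).

Definition in_tree_of (F : {set V * V}) (i j : V) : bool :=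
  is_root F j && connect (srel F) j i.

Variable R : realFieldType.

Definition fweight (w : V -> V -> R) (F : {set V * V}) : R :=
  \prod_(a in F) w a.1 a.2.

Definition Jbar (E : rel V) (w : V -> V -> R) (i j : V) : R :=
  (\sum_(F : {set V * V} | max_out_forest E F && in_tree_of F i j) fweight w F)
  / (\sum_(F : {set V * V} | max_out_forest E F) fweight w F).

Definition strong_comp (E : rel V) (k : V) : {set V} :=
  [set v | connect E k v && connect E v k].

Definition is_basis_bicomp (E : rel V) (S : {set V}) : bool :=
  [exists k, S == strong_comp E k] &&
  [forall u, forall v, (E u v && (v \in S)) ==> (u \in S)].

Definition Ktilde (E : rel V) : {set V} :=
  [set v | [exists S : {set V}, is_basis_bicomp E S && (v \in S)]].

Definition Kof (E : rel V) (k : V) : {set V} := strong_comp E k.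

Definition Kplus (E : rel V) (k : V) : {set V} :=
  [set v | [exists u in Kof E k, connect E u v] &&
           [forall S : {set V}, (is_basis_bicomp E S && (S != Kof E k)) ==>
                                 [forall u in S, ~~ connect E u v]]].

End Forests.

From HB Require Import structures.
From mathcomp Require Import all_boot all_order all_algebra.
Import Order.TTheory GRing.Theory Num.Theory.
Set Implicit Arguments. Unset Strict Implicit. Unset Printing Implicit Defensive.

(* Everything rests on one combinatorial fact about maximum
   out-forests: if r1 and r2 are roots of a maximum out-forest F and the
   digraph has a directed path from r1 to r2, then r1 = r2.  Otherwise some
   arc (x, y) of that path enters the tree of r2 from outside; "rehanging" y
   onto x (replacing the arc of F entering y by (x, y)) is again an
   out-forest, which either has one more arc (if y = r2) or strictly shrinks
   the tree of r2, so induction on the size of that tree gives a larger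
   out-forest, a contradiction.  Consequences: the strong component of a root
   of a maximum out-forest is a basis bicomponent, and a vertex lying in the
   tree of a root r reaches no other root.
   The numerical statements follow because Jbar_ij is a ratio of sums of
   nonnegative forest weights with a common denominator: an inclusion of the
   index sets gives an inequality, a strict inequality yields a maximum
   out-forest separating the two index sets, and positivity yields a maximum
   out-forest in the numerator. *)

Section Reachability.
Variables (V : finType) (e : rel V).

Lemma connect_last_arc a b :
  connect e a b -> a != b -> exists2 z, connect e a z & e z b.
Proof.
move=> /connectP [p pth ->]; elim/last_ind: p pth => [|q z _] /=.
  by rewrite eqxx.
rewrite rcons_path last_rcons => /andP [pq ez] _.
by exists (last a q) => //; apply/connectP; exists q.
Qed.

Lemma connect_forward_closed (P : pred V) a b :
  (forall u v, P u -> e u v -> P v) -> P a -> connect e a b -> P b.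
Proof.
move=> stepP Pa /connectP [p pth ->].
elim: p a Pa pth => [|z p IH] a Pa //= /andP [eaz pth].
exact: IH (stepP _ _ Pa eaz) pth.
Qed.

Lemma connect_crossing_arc (P : pred V) a b :
  connect e a b -> ~~ P a -> P b -> exists x y, [/\ e x y, ~~ P x & P y].
Proof.
move=> cab nPa Pb.
have [/existsP [x /existsP [y /and3P [exy nPx Py]]] | none] :=
  boolP [exists x, exists y, [&& e x y, ~~ P x & P y]].
  by exists x, y.
suff : ~~ P b by rewrite Pb.
apply: (connect_forward_closed (P := fun u => ~~ P u)) nPa cab => u v nPu euv.
apply/negP => Pv; move/negP: none; apply.
by apply/existsP; exists u; apply/existsP; exists v; rewrite euv nPu Pv.
Qed.

End Reachability.

Section OutForests.
Variables (V : finType) (E : rel V).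
Implicit Types (F : {set V * V}) (r u v x y : V).

Lemma max_out_forest_forest F : max_out_forest E F -> out_forest E F.
Proof. by case/andP. Qed.

Lemma out_forest_arc F u v : out_forest E F -> (u, v) \in F -> E u v.
Proof. by case/and3P => /forall_inP arcE _ _ /arcE. Qed.

Lemma out_forest_parent_uniq F u u' v :
  out_forest E F -> (u, v) \in F -> (u', v) \in F -> u = u'.
Proof.
case/and3P => _ /forallP /(_ v) /card_le1_eqP indeg _ uv u'v.
by apply: indeg; rewrite inE.
Qed.

Lemma out_forest_tree F v :
  out_forest E F -> exists2 r, is_root F r & connect (srel F) r v.
Proof.
by case/and3P => _ _ /forallP /(_ v) /existsP [r /andP [] ]; exists r.
Qed.

Lemma out_forest_connect F a b :
  out_forest E F -> connect (srel F) a b -> connect E a b.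
Proof.
move=> oF; apply: connect_sub => u v uv.
exact/connect1/(out_forest_arc oF uv).
Qed.

Lemma root_unreachable F a r : is_root F r -> connect (srel F) a r -> a = r.
Proof.
move=> /forallP rootr car; apply/eqP; apply/negPn/negP => ar.
have [z _ zr] := connect_last_arc car ar.
by move: (rootr z); rewrite /srel in zr; rewrite zr.
Qed.

Definition desc F r : {set V} := [set v | connect (srel F) r v].

Definition rehang F x y : {set V * V} := (x, y) |: [set a in F | a.2 != y].

Section Rehang.
Variables (F : {set V * V}) (x y : V).
Local Notation F' := (rehang F x y).

Lemma in_rehang u v :
  ((u, v) \in F') = ((u == x) && (v == y)) || (((u, v) \in F) && (v != y)).
Proof. by rewrite !inE /= xpair_eqE. Qed.

Lemma rehang_keep u v : v != y -> (u, v) \in F -> (u, v) \in F'.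
Proof. by move=> vy uv; rewrite in_rehang vy uv orbT. Qed.

Lemma rehang_root v : is_root F' v = is_root F v && (v != y).
Proof.
apply/forallP/andP => [rootv | [/forallP rootv vy] u].
- have vy : v != y.
    by apply/negP => /eqP vy; have := rootv x; rewrite in_rehang vy !eqxx.
  split=> //; apply/forallP => u; have := rootv u.
  by rewrite in_rehang (negbTE vy) andbF andbT.
- by rewrite in_rehang (negbTE vy) andbF andbT; exact: rootv.
Qed.

Lemma rehang_reach a b :
  connect (srel F) a b -> connect (srel F') y b || connect (srel F') a b.
Proof.
apply: (connect_forward_closed
  (P := fun u => connect (srel F') y u || connect (srel F') a u));
  last by rewrite connect0 orbT.
move=> u v reach_u uv; have [-> | vy] := eqVneq v y; first by rewrite connect0.
have uv' : srel F' u v by exact: rehang_keep.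
by case/orP: reach_u => c; apply/orP; [left | right];
  exact: connect_trans c (connect1 uv').
Qed.

Lemma rehang_reach_from b : connect (srel F') y b -> connect (srel F) y b.
Proof.
apply: (connect_forward_closed (P := connect (srel F) y)); last exact: connect0.
move=> u v cyu; rewrite /srel in_rehang.
case/orP => [/andP [_ /eqP ->] | /andP [uv _]]; first exact: connect0.
exact: connect_trans cyu (connect1 uv).
Qed.

Lemma rehang_out_forest :
  out_forest E F -> E x y -> ~~ connect (srel F) y x -> out_forest E F'.
Proof.
move=> oF Exy nyx; apply/and3P; split.
- apply/forall_inP => [[u v]]; rewrite in_rehang.
  by case/orP => [/andP [/eqP -> /eqP ->] | /andP [/(out_forest_arc oF) ]].
- apply/forallP => v; apply/card_le1_eqP => u1 u2; rewrite !inE /= !xpair_eqE.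
  case/orP => [/andP [/eqP -> /eqP ->] | /andP [u1v vy]].
    by rewrite eqxx andbT andbF orbF => /eqP.
  rewrite (negbTE vy) andbF /= andbT => u2v.
  exact: out_forest_parent_uniq oF u2v u1v.
- apply/forallP => v.
  suff [r rootr crv] : exists2 r, is_root F' r & connect (srel F') r v.
    by apply/existsP; exists r; rewrite rootr.
  have survives a b : connect (srel F) a b -> ~~ connect (srel F) y b ->
      connect (srel F') a b.
    move=> cab nyb; have := rehang_reach cab.
    by rewrite (negbTE (contra (@rehang_reach_from b) nyb)).
  have [cyv | nyv] := boolP (connect (srel F) y v).
  + have [rx rootrx crx] := out_forest_tree x oF.
    have rxy : rx != y by apply: contra nyx => /eqP <-.
    exists rx; first by rewrite rehang_root rootrx rxy.
    have arc_xy : srel F' x y by rewrite /srel in_rehang !eqxx.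
    apply: connect_trans (survives _ _ crx nyx) _.
    by apply: connect_trans (connect1 arc_xy) _; have := rehang_reach cyv;
      rewrite orbb.
  + have [r rootr crv] := out_forest_tree v oF.
    have ry : r != y by apply: contra nyv => /eqP <-.
    by exists r; [rewrite rehang_root rootr ry | exact: survives].
Qed.

Lemma card_rehang : out_forest E F ->
  #|F'| = if is_root F y then #|F|.+1 else #|F|.
Proof.
move=> oF; rewrite cardsU1 inE /= eqxx andbF /=.
case: ifP => rooty.
- suff -> : [set a in F | a.2 != y] = F by [].
  apply/setP => [[u v]]; rewrite inE /=.
  have [-> | _] := eqVneq v y; last by rewrite andbT.
  by rewrite (negbTE (forallP rooty u)).
- move/negbT: rooty => /forallPn [p /negPn py].
  suff -> : [set a in F | a.2 != y] = F :\ (p, y).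
    by rewrite (cardsD1 (p, y) F) py.
  apply/setP => [[u v]]; rewrite !inE /= xpair_eqE.
  have [-> | _] := eqVneq v y; last by rewrite /= andbT andbF.
  rewrite andbF andbT; case uy: ((u, y) \in F); last by rewrite andbF.
  by rewrite (out_forest_parent_uniq oF uy py) eqxx.
Qed.

Lemma rehang_desc_proper r : out_forest E F -> is_root F r ->
  connect (srel F) r y -> ~~ connect (srel F) r x -> y != r ->
  desc F' r \proper desc F r.
Proof.
move=> oF rootr cry nrx yr.
have shrunk v : connect (srel F') r v ->
    connect (srel F) r v && ~~ connect (srel F) y v.
  apply: (connect_forward_closed
    (P := fun u => connect (srel F) r u && ~~ connect (srel F) y u))
    => [u w /andP [cru nyu] | ]; last first.
    by rewrite connect0; apply: contra yr => /(root_unreachable rootr) ->.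
  rewrite /srel in_rehang.
  case/orP => [/andP [/eqP ux _] | /andP [uw wy]].
    by move: cru; rewrite ux (negbTE nrx).
  rewrite (connect_trans cru (connect1 uw)); apply/negP => cyw.
  have yw : y != w by rewrite eq_sym.
  have [z cyz zw] := connect_last_arc cyw yw.
  by rewrite (out_forest_parent_uniq oF uw zw) cyz in nyu.
apply/properP; split.
  by apply/subsetP => v; rewrite !inE => /shrunk /andP [].
by exists y; rewrite !inE //; apply/negP => /shrunk; rewrite connect0 andbF.
Qed.

End Rehang.

Lemma augment r1 r2 : r1 != r2 -> connect E r1 r2 -> forall n F,
  out_forest E F -> is_root F r1 -> is_root F r2 -> #|desc F r2| <= n ->
  exists2 G, out_forest E G & #|F| < #|G|.
Proof.
move=> r12 c12; elim=> [|n IH] F oF root1 root2 size_n.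
  move: size_n; rewrite leqn0 cards_eq0 => /eqP/setP/(_ r2).
  by rewrite !inE connect0.
have [||x [y [Exy nx cy]]] := connect_crossing_arc (P := connect (srel F) r2) c12.
- by apply: contra r12 => c; rewrite (root_unreachable root1 c).
- exact: connect0.
have nyx : ~~ connect (srel F) y x by apply: contra nx; exact: connect_trans cy.
have oF' := rehang_out_forest oF Exy nyx.
have := card_rehang x y oF; case: ifP => rooty size_eq.
  by exists (rehang F x y); rewrite // size_eq.
have yr2 : y != r2 by apply: contraFN rooty => /eqP ->.
have yr1 : y != r1.
  apply: contra r12 => /eqP yr1; rewrite yr1 in cy.
  by rewrite (root_unreachable root1 cy).
have root1' : is_root (rehang F x y) r1 by rewrite rehang_root root1 eq_sym yr1.
have root2' : is_root (rehang F x y) r2 by rewrite rehang_root root2 eq_sym yr2.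
have size_n' : #|desc (rehang F x y) r2| <= n.
  rewrite -ltnS; apply: leq_trans size_n.
  exact: proper_card (rehang_desc_proper oF root2 cy nx yr2).
have [G oG ltG] := IH (rehang F x y) oF' root1' root2' size_n'.
by exists G; rewrite // -size_eq.
Qed.

Lemma max_forest_roots_eq F r1 r2 : max_out_forest E F ->
  is_root F r1 -> is_root F r2 -> connect E r1 r2 -> r1 = r2.
Proof.
case/andP => oF /eqP sizeF root1 root2 c12; apply/eqP; apply/negPn/negP => r12.
have [G oG ltG] := augment r12 c12 oF root1 root2 (leqnn _).
have := @leq_bigmax_cond _ (out_forest E) (fun G => #|G|) G oG.
by rewrite -/(max_forest_size E) -sizeF leqNgt ltG.
Qed.

Lemma max_forest_tree_root F rho r v : max_out_forest E F ->
  is_root F rho -> connect (srel F) rho v -> is_root F r -> connect E v r ->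
  rho = r.
Proof.
move=> mF rootrho crv rootr cvr; apply: (max_forest_roots_eq mF rootrho rootr).
exact: connect_trans (out_forest_connect (max_out_forest_forest mF) crv) cvr.
Qed.

Lemma basis_bicomp_pred S u v :
  is_basis_bicomp E S -> connect E u v -> v \in S -> u \in S.
Proof.
move=> /andP [_ /forallP closedS] cuv vS.
move: vS; apply: contraLR => nuS.
apply: (connect_forward_closed (P := fun a => a \notin S)) nuS cuv => a b naS Eab.
by apply: contra naS => bS; move/forallP: (closedS a) => /(_ b); rewrite Eab bS.
Qed.

Lemma basis_bicomp_conn S a b :
  is_basis_bicomp E S -> a \in S -> b \in S -> connect E a b.
Proof.
case/andP => /existsP [k /eqP ->] _; rewrite !inE => /andP [_ ak] /andP [kb _].
exact: connect_trans ak kb.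
Qed.

(* The strong component of a root of a maximum out-forest is a basis
   bicomponent: an arc entering it comes from a tree whose root must be r. *)
Lemma max_forest_root_basis F r : max_out_forest E F -> is_root F r ->
  is_basis_bicomp E (strong_comp E r).
Proof.
move=> mF rootr; apply/andP; split; first by apply/existsP; exists r.
apply/forallP => u; apply/forallP => v; apply/implyP => /andP [Euv].
rewrite !inE => /andP [crv cvr].
have cur : connect E u r := connect_trans (connect1 Euv) cvr.
rewrite cur andbT.
have [rho rootrho crhou] := out_forest_tree u (max_out_forest_forest mF).
rewrite -(max_forest_tree_root mF rootrho crhou rootr cur).
exact: out_forest_connect (max_out_forest_forest mF) crhou.
Qed.

Lemma max_forest_root_Ktilde F r : max_out_forest E F -> is_root F r ->
  r \in Ktilde E.
Proof.
move=> mF rootr; rewrite inE; apply/existsP; exists (strong_comp E r).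
by rewrite (max_forest_root_basis mF rootr) inE connect0.
Qed.

End OutForests.

Local Open Scope ring_scope.

Lemma ler_sum_subpred (R : numDomainType) (I : finType) (P Q : pred I)
    (f : I -> R) :
  (forall a, P a -> Q a) -> (forall a, Q a -> 0 <= f a) ->
  \sum_(a | P a) f a <= \sum_(a | Q a) f a.
Proof.
move=> PQ f_ge0; rewrite (bigID P Q) /= (eq_bigl P) => [|a]; last first.
  by apply/andP/idP => [[] | Pa] //; split=> //; exact: PQ.
by rewrite lerDl; apply: sumr_ge0 => a /andP [Qa _]; exact: f_ge0.
Qed.

Section Jbar.
Variables (R : realFieldType) (V : finType) (E : rel V) (w : V -> V -> R).
Hypothesis wpos : forall i j, E i j -> 0 < w i j.

Lemma fweight_ge0 F : out_forest E F -> 0 <= fweight w F.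
Proof.
move=> oF; apply: prodr_ge0 => [[u v]] uv; apply/ltW/wpos.
exact: out_forest_arc oF uv.
Qed.

Lemma Jbar_le_of_sub a b c d :
  (forall F, max_out_forest E F -> in_tree_of F a b -> in_tree_of F c d) ->
  Jbar E w a b <= Jbar E w c d.
Proof.
move=> sub; rewrite /Jbar; apply: ler_wpM2r.
  rewrite invr_ge0; apply: sumr_ge0 => F mF.
  exact/fweight_ge0/max_out_forest_forest.
apply: ler_sum_subpred => [F /andP [mF tF] | F /andP [mF _]].
  by rewrite mF sub.
exact/fweight_ge0/max_out_forest_forest.
Qed.

Lemma Jbar_pos_witness a b :
  0 < Jbar E w a b -> exists F, max_out_forest E F && in_tree_of F a b.
Proof.
have [F tF _ | none] := pickP (fun F => max_out_forest E F && in_tree_of F a b).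
  by exists F.
by rewrite /Jbar big_pred0 // mul0r ltxx.
Qed.

Lemma Jbar_lt_witness a b c d : Jbar E w c d < Jbar E w a b ->
  exists F, [/\ max_out_forest E F, in_tree_of F a b & ~~ in_tree_of F c d].
Proof.
move=> lt.
case: (pickP (fun F =>
  [&& max_out_forest E F, in_tree_of F a b & ~~ in_tree_of F c d])) => [F | none].
  by case/and3P; exists F.
suff : Jbar E w a b <= Jbar E w c d by rewrite leNgt lt.
apply: Jbar_le_of_sub => F mF tab.
by have := none F; rewrite mF tab /= => /negbFE.
Qed.

Lemma Jbar_diag_ge i j : Jbar E w j i <= Jbar E w i i.
Proof.
by apply: Jbar_le_of_sub => F _ /andP [rooti _]; rewrite /in_tree_of rooti connect0.
Qed.

(* Part (2): a maximum out-forest rooted at i where j hangs in another tree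
   rho gives a basis bicomponent, that of rho, reaching j. *)
Lemma Jbar_diag_gt i j : Jbar E w j i < Jbar E w i i ->
  [/\ i \in Ktilde E, j \notin Kplus E i & ~~ connect E j i].
Proof.
move=> /Jbar_lt_witness [G [mG /andP [rooti _] tji]].
have nij : ~~ connect (srel G) i j by rewrite /in_tree_of rooti in tji.
have [rho rootrho crhoj] := out_forest_tree j (max_out_forest_forest mG).
have rhoi : rho != i by apply: contra nij => /eqP <-.
split; first exact: max_forest_root_Ktilde mG rooti.
- rewrite inE negb_and; apply/orP; right; apply/forallPn.
  exists (strong_comp E rho).
  rewrite negb_imply (max_forest_root_basis mG rootrho).
  have -> /= : strong_comp E rho != Kof E i.
    apply/eqP => same.
    have : i \in strong_comp E rho by rewrite same inE connect0.
    rewrite inE => /andP [crhoi _].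
    by rewrite (max_forest_roots_eq mG rootrho rooti crhoi) eqxx in rhoi.
  apply/forall_inPn; exists rho; first by rewrite inE connect0.
  by rewrite negbK (out_forest_connect (max_out_forest_forest mG) crhoj).
- apply: contra rhoi => cji.
  by rewrite (max_forest_tree_root mG rootrho crhoj rooti cji).
Qed.

(* Part (3): if moreover j lies in the tree of i in some maximum out-forest,
   then j in a basis bicomponent S would force i into S and hence a path
   from j to i. *)
Lemma Jbar_diag_gt_pos i j : 0 < Jbar E w j i < Jbar E w i i ->
  j \notin Ktilde E /\
  (forall F, max_out_forest E F -> ~~ is_root F j).
Proof.
case/andP => pos /Jbar_diag_gt [_ _ nji].
have [F /andP [mF /andP [_ cij]]] := Jbar_pos_witness pos.
have nK : j \notin Ktilde E.
  apply/negP; rewrite inE => /existsP [S /andP [basisS jS]].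
  have iS := basis_bicomp_pred basisS
    (out_forest_connect (max_out_forest_forest mF) cij) jS.
  by rewrite (basis_bicomp_conn basisS jS iS) in nji.
by split=> // G mG; apply: contra nK; exact: max_forest_root_Ktilde mG.
Qed.

(* Part (4): a maximum out-forest with i in the tree of j gives a path from j
   to i, so j lies in the tree of i whenever i is a root. *)
Lemma Jbar_offdiag_pos i j : 0 < Jbar E w i j -> Jbar E w i i = Jbar E w j i.
Proof.
move=> /Jbar_pos_witness [F /andP [mF /andP [_ cji]]].
apply/le_anti; rewrite Jbar_diag_ge andbT.
apply: Jbar_le_of_sub => G mG /andP [rooti _].
have [rho rootrho crhoj] := out_forest_tree j (max_out_forest_forest mG).
have cji_E := out_forest_connect (max_out_forest_forest mF) cji.
by rewrite /in_tree_of rooti -(max_forest_tree_root mG rootrho crhoj rooti cji_E).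
Qed.

End Jbar.

Theorem theorem3 (R : realFieldType) (V : finType) (E : rel V) (w : V -> V -> R)
  (noloop : forall i, ~~ E i i) (wpos : forall i j, E i j -> 0 < w i j) :
  forall i j : V,
  [/\ Jbar E w j i <= Jbar E w i i,
      Jbar E w j i < Jbar E w i i ->
        [/\ i \in Ktilde E, j \notin Kplus E i & ~~ connect E j i],
      0 < Jbar E w j i < Jbar E w i i ->
        j \notin Ktilde E /\
        (forall F : {set V * V}, max_out_forest E F -> ~~ is_root F j) &
      0 < Jbar E w i j -> Jbar E w i i = Jbar E w j i].
Proof.
move=> i j; split.
- exact: Jbar_diag_ge.
- exact: Jbar_diag_gt.
- exact: Jbar_diag_gt_pos.
- exact: Jbar_offdiag_pos.
Qed.
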